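(* Let $K\supseteq\mathbb{F}_q$ be a field with Frobenius $\phi_q\colon a\mapsto a^q$, let $(M,\Phi)$ be an $n$-dimensional Frobenius module over $(K,\phi_q)$ with representing matrix $D\in\operatorname{GL}_n(K)$ with respect to some basis, and let $f\in K[X]$ be a polynomial of degree $q^n$. Suppose that every solution $x=(x_1,\ldots,x_n)\in\overline K^{\,n}$ of $D\cdot(x_1^q,\dots,x_n^q)^{\mathrm{tr}}=x$ is uniquely determined by its first coordinate $x_1$, that all other coordinates of $x$ lie in the field $K(x_1)$, and that $f(x_1)=0$. Then $\mathrm{Gal}^\Phi(M)\cong\mathrm{Gal}_K(f)$.
   Context: A Frobenius module over $(K,\phi_q)$ is a finite-dimensional $K$-vector space $M$ with an injective $\phi_q$-semilinear map $\Phi$; its representing matrix $D$ in a basis satisfies $\Phi(x)=D\cdot(x_1^q,\dots,x_n^q)^{\mathrm{tr}}$ in coordinates. The solution field is the minimal extension $L/K$ (inside the algebraic closure $\overline K$) such that $\{x\in L\otimes M:\Phi(x)=x\}$ has $\mathbb{F}_q$-dimension $\dim_K M$; it is Galois over $K$ and $\mathrm{Gal}^\Phi(M):=\mathrm{Gal}(L/K)$. *)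

From HB Require Import structures.
From mathcomp Require Import all_boot all_order all_algebra all_fingroup all_field.
Set Implicit Arguments.
Unset Strict Implicit.
Unset Printing Implicit Defensive.
Import GRing.Theory.
Local Open Scope ring_scope.

Section FrobSolutions.
Variables (K : fieldType) (L : fieldExtType K) (q n : nat).

Definition is_frob_sol (D : 'M[K]_n) (x : 'cV[L]_n) : Prop :=
  map_mx (in_alg L) D *m map_mx (fun a : L => a ^+ q) x = x.

Definition coords_in (E : {vspace L}) (x : 'cV[L]_n) : Prop :=
  forall i, x i 0 \in E.

(* the fixed-point space with coordinates in E has F_q-dimension n,
   i.e. it is a finite set with exactly q^n elements *)
Definition full_sol_space (D : 'M[K]_n) (E : {vspace L}) : Prop :=
  exists s : seq 'cV[L]_n,
    [/\ uniq s, size s = (q ^ n)%N &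
        forall x, (is_frob_sol D x /\ coords_in E x) <-> x \in s].

Definition is_solution_field (D : 'M[K]_n) (E : {subfield L}) : Prop :=
  full_sol_space D E /\
  forall E' : {subfield L}, full_sol_space D E' -> (E <= E')%VS.
End FrobSolutions.

(* Solutions of the Frobenius equation are determined by their first
   coordinate, which is a root of f; as the solution space of the solution
   field has q^n = deg f elements, these first coordinates are all the roots
   of f.  Hence the solution field contains the splitting field of f, and
   conversely the splitting field contains all coordinates of all solutions,
   so by minimality the two fields coincide. *)
From HB Require Import structures.
From mathcomp Require Import all_boot all_order all_algebra all_fingroup all_field.
Set Implicit Arguments.
Unset Strict Implicit.
Unset Printing Implicit Defensive.
Import GRing.Theory.
Local Open Scope ring_scope.

Lemma root_in_maximal_roots (R : idomainType) (p : {poly R}) (rs : seq R) z :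
  p != 0 -> size p = (size rs).+1 -> uniq rs -> all (root p) rs ->
  root p z -> z \in rs.
Proof.
move=> p_neq0 size_p rs_uniq rs_roots pz; apply/negPn/negP => z_notin_rs.
have := max_poly_roots p_neq0 (rs := z :: rs).
by rewrite /= pz rs_roots z_notin_rs rs_uniq size_p ltnn => /(_ isT isT).
Qed.

Section SplittingFieldFor.
Variables (F : fieldType) (L : fieldExtType F).

Lemma splittingFieldFor_root (U : {vspace L}) (p : {poly L}) (E : {vspace L}) z :
  splittingFieldFor U p E -> root p z -> z \in E.
Proof.
move=> [rs p_split <-]; rewrite (eqp_root p_split) root_prod_XsubC.
exact: seqv_sub_adjoin.
Qed.

Lemma splittingFieldFor_min (K E M : {subfield L}) (p : {poly L}) :
  splittingFieldFor K p E -> (K <= M)%VS ->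
  (forall z, root p z -> z \in M) -> (E <= M)%VS.
Proof.
move=> [rs p_split <-] sKM roots_M; apply/Fadjoin_seqP; split=> // z z_rs.
by apply: roots_M; rewrite (eqp_root p_split) root_prod_XsubC.
Qed.

End SplittingFieldFor.

Section FrobeniusSolutions.
Variables (K : fieldType) (L : fieldExtType K) (q n : nat).
Variables (D : 'M[K]_n) (i0 : 'I_n) (p : {poly L}).

Let x1 (x : 'cV[L]_n) := x i0 0.

Hypothesis size_p : size p = (q ^ n).+1.
Hypothesis sol_inj : forall x y,
  is_frob_sol q D x -> is_frob_sol q D y -> x1 x = x1 y -> x = y.
Hypothesis sol_root : forall x, is_frob_sol q D x -> root p (x1 x).

Lemma frob_sols_roots {s : seq 'cV[L]_n} :
  uniq s -> size s = (q ^ n)%N -> (forall x, x \in s -> is_frob_sol q D x) ->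
  forall z, root p z -> z \in map x1 s.
Proof.
move=> s_uniq size_s s_sols z pz; apply: root_in_maximal_roots pz.
- by rewrite -size_poly_eq0 size_p.
- by rewrite size_map size_s.
- by rewrite map_inj_in_uniq // => x y /s_sols x_sol /s_sols; apply: sol_inj.
- by apply/allP => _ /mapP [x /s_sols x_sol ->]; apply: sol_root.
Qed.

Lemma full_sol_space_sols (E : {vspace L}) x :
  full_sol_space q D E -> is_frob_sol q D x -> coords_in E x.
Proof.
move=> [s [s_uniq size_s s_spec]] x_sol.
have s_sols y : y \in s -> is_frob_sol q D y by move/s_spec=> [].
have /mapP [y y_s x1_xy] := frob_sols_roots s_uniq size_s s_sols (sol_root x_sol).
by rewrite (sol_inj x_sol (s_sols y y_s) x1_xy); case/s_spec: y_s.
Qed.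

Lemma full_sol_space_root (E : {vspace L}) z :
  full_sol_space q D E -> root p z -> z \in E.
Proof.
move=> [s [s_uniq size_s s_spec]] pz.
have s_sols y : y \in s -> is_frob_sol q D y by move/s_spec=> [].
have /mapP [x x_s ->] := frob_sols_roots s_uniq size_s s_sols pz.
by case/s_spec: x_s => _ /(_ i0).
Qed.

Lemma full_sol_space_transfer (E E' : {vspace L}) :
  full_sol_space q D E ->
  (forall x, is_frob_sol q D x -> coords_in E' x) -> full_sol_space q D E'.
Proof.
move=> E_full sols_E'; have [s [s_uniq size_s s_spec]] := E_full.
exists s; split=> // x; split=> [[x_sol _] | /s_spec [x_sol _]].
- by apply/s_spec; split; last exact: full_sol_space_sols.
- by split; last exact: sols_E'.
Qed.

End FrobeniusSolutions.

Theorem mainTheorem10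
  (K : fieldType) (Fq : finFieldType) (iota : {rmorphism Fq -> K})
  (n : nat) (hn : (0 < n)%N) (D : 'M[K]_n) (f : {poly K})
  (L : splittingFieldType K) (Esol Ef : {subfield L}) :
  let q := #|Fq| in
  let x1 := fun x : 'cV[L]_n => x (Ordinal hn) 0 in
  D \in unitmx ->
  size f = (q ^ n).+1 ->
  is_solution_field q D Esol ->
  splittingFieldFor 1%VS (map_poly (in_alg L) f) Ef ->
  (forall x y, is_frob_sol q D x -> is_frob_sol q D y -> x1 x = x1 y -> x = y) ->
  (forall x, is_frob_sol q D x -> forall i, x i 0 \in <<1%VS; x1 x>>%VS) ->
  (forall x, is_frob_sol q D x -> root (map_poly (in_alg L) f) (x1 x)) ->
  ('Gal(Esol / 1%VS) \isog 'Gal(Ef / 1%VS))%g.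
Proof.
move=> q x1 _ size_f [Esol_full Esol_min] Ef_split sol_inj sol_coords sol_root.
have size_fL : size (map_poly (in_alg L) f) = (q ^ n).+1.
  by rewrite size_map_poly.
suff -> : Esol = Ef by apply: isog_refl.
apply/val_inj/subv_anti/andP; split.
- apply: Esol_min; apply: (full_sol_space_transfer size_fL sol_inj sol_root Esol_full).
  move=> x x_sol i; apply: subvP (sol_coords x x_sol i).
  by rewrite sub_adjoin1v (splittingFieldFor_root Ef_split) ?sol_root.
- apply: (splittingFieldFor_min Ef_split (sub1v _)) => z.
  exact: (full_sol_space_root size_fL sol_inj sol_root Esol_full).
Qed.
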